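(* Let $N\ge 2$ and let $\gamma_k$ ($k=1,\dots,N-1$) be as defined below. Then as $\lambda\to+\infty$, $$R_1=\sum_{k=1}^{N-1}\frac{k_{k+1}^2-k_k^2}{4\lambda^2}\Big(1+\mathcal{O}\big(\lambda^{-2}\big)\Big)\exp(-\gamma_k\lambda),$$ meaning that there are functions $\epsilon_k(\lambda)=\mathcal{O}(\lambda^{-2})$ as $\lambda\to+\infty$ such that $R_1=\sum_{k=1}^{N-1}\frac{k_{k+1}^2-k_k^2}{4\lambda^2}(1+\epsilon_k(\lambda))\exp(-\gamma_k\lambda)$ for all sufficiently large $\lambda$.
   Context: Fix real constants $\omega>0$, $\mu>0$, an integer $N\ge 2$, conductivities $\sigma_1,\dots,\sigma_N>0$ and thicknesses $h_1,\dots,h_{N-1}>0$. For $j=1,\dots,N$ let $k_j$ be a complex number with $k_j^2=-i\omega\mu\sigma_j$, and set $k_0:=0$. For real $\lambda>0$ define $u_0(\lambda)=\lambda$ and $u_j(\lambda)=\sqrt{\lambda^2-k_j^2}=\sqrt{\lambda^2+i\omega\mu\sigma_j}$ (principal square root), $j=1,\dots,N$. Define $\Psi_j=\dfrac{u_{j-1}-u_j}{u_{j-1}+u_j}$ for $j=1,\dots,N$, and the reflection terms recursively by $R_N=0$, $$R_j=\frac{R_{j+1}+\Psi_{j+1}}{R_{j+1}\Psi_{j+1}+1}\,e^{-2u_jh_j},\quad j=N-1,\dots,1,\qquad R_0=\frac{R_1+\Psi_1}{R_1\Psi_1+1}.$$ Put $c_i=2h_i\sqrt{1+i\omega\mu\sigma_i/\lambda^2}$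 (principal square root) for $i=1,\dots,N-1$, and $\gamma_k=\sum_{i=1}^k c_i$ for $k=1,\dots,N-1$. *)

From HB Require Import structures.
From mathcomp Require Import all_boot all_order all_algebra.
From mathcomp Require Import complex.
From mathcomp Require Import all_classical all_reals all_analysis.
Set Implicit Arguments. Unset Strict Implicit. Unset Printing Implicit Defensive.
Import Order.TTheory GRing.Theory Num.Theory.
Local Open Scope ring_scope. Local Open Scope complex_scope.

Section Defs.
Variable R : realType.
Local Notation C := R[i].

Definition cexp (z : C) : C :=
  (expR (complex.Re z))%:C * ((cos (complex.Im z)) +i* (sin (complex.Im z)))%C.

Variables (omega mu : R) (N : nat) (sigma h : nat -> R).

Definition u (j : nat) (lam : R) : C :=
  if j == 0%N then lam%:C
  else sqrtc ((lam ^+ 2)%:C + 'i%C * (omega * mu * sigma j)%:C).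

Definition Psi (j : nat) (lam : R) : C :=
  (u j.-1 lam - u j lam) / (u j.-1 lam + u j lam).

(* Rup n j lam = R_j when n = N - j, i.e. R_N = 0 and
   R_j = (R_{j+1} + Psi_{j+1}) / (R_{j+1} Psi_{j+1} + 1) * exp(-2 u_j h_j) *)
Fixpoint Rup (n j : nat) (lam : R) : C :=
  match n with
  | 0%N => 0
  | n'.+1 => let r := Rup n' j.+1 lam in
             (r + Psi j.+1 lam) / (r * Psi j.+1 lam + 1)
             * cexp (- (2%:R * u j lam * (h j)%:C))
  end.

Definition Rrefl (j : nat) (lam : R) : C := Rup (N - j) j lam.

Definition cc (i : nat) (lam : R) : C :=
  2%:R * (h i)%:C * sqrtc (1 + 'i%C * (omega * mu * sigma i / lam ^+ 2)%:C).

Definition gamma (k : nat) (lam : R) : C := \sum_(1 <= i < k.+1) cc i lam.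

End Defs.

From Pilot Require Import Defs.
From HB Require Import structures.
From mathcomp Require Import all_boot all_order all_algebra.
From mathcomp Require Import complex.
From mathcomp Require Import all_classical all_reals all_analysis.
From mathcomp Require Import ring lra.
Import Order.TTheory GRing.Theory Num.Theory.
Local Open Scope ring_scope. Local Open Scope complex_scope.
Set Implicit Arguments. Unset Strict Implicit.

(* Unrolling the recursion gives
     R_1 = sum_k Psi_(k+1) prod_(i <= k) exp(-2 u_i h_i) Q_i,
   with Q_i = 1 / (1 + R_(i+1) Psi_(i+1)).  Two exact identities put the k-th
   term in the claimed shape: 2 u_i h_i = c_i lambda, so the exponentials
   multiply to exp(-gamma_k lambda); and Psi_(k+1) = (u_k^2 - u_(k+1)^2) /
   (u_k + u_(k+1))^2 with u_k^2 - u_(k+1)^2 = k_(k+1)^2 - k_k^2.  The rest,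
   4 lambda^2 / (u_k + u_(k+1))^2 * prod_i Q_i, is 1 + O(lambda^-2): since
   u_j^2 = lambda^2 + i omega mu sigma_j, u_j = lambda + O(1/lambda), hence
   Psi_j = O(lambda^-2), the R_j stay small by induction and every Q_i is
   1 + O(lambda^-2). *)

(* The modulus, typed in [R] so that [lra] and [nra] see a single ring. *)
Definition absc (R : realType) (z : R[i]) : R := Normc.normc z.

Section ComplexFacts.
Variable R : realType.
Implicit Types (z w s t : R[i]) (x : R).

Lemma normr_absc z : `|z| = (absc z)%:C. Proof. by []. Qed.

Lemma absc0 : absc (0 : R[i]) = 0. Proof. exact: Normc.normc0. Qed.
Lemma absc1 : absc (1 : R[i]) = 1. Proof. exact: Normc.normc1. Qed.
Lemma abscM z w : absc (z * w) = absc z * absc w. Proof. exact: Normc.normcM. Qed.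
Lemma abscV z : absc z^-1 = (absc z)^-1. Proof. exact: Normc.normcV. Qed.
Lemma abscN z : absc (- z) = absc z. Proof. exact: normcN. Qed.
Lemma abscD_le z w : absc (z + w) <= absc z + absc w. Proof. exact: le_normcD. Qed.

Lemma absc_ge0 z : 0 <= absc z.
Proof. by case: z => a b; rewrite /= sqrtr_ge0. Qed.

Lemma absc_real x : absc x%:C = `|x|.
Proof. by rewrite /= expr0n /= addr0 sqrtr_sqr. Qed.

Lemma absc_i : absc ('i : R[i]) = 1.
Proof. by rewrite /= expr0n /= expr1n add0r sqrtr1. Qed.

Lemma abscB_le z w : absc (z - w) <= absc z + absc w.
Proof. by rewrite -(abscN w) abscD_le. Qed.

Lemma abscD_ge z w : absc z - absc w <= absc (z + w).
Proof. have := abscD_le (z + w) (- w); rewrite addrK abscN; lra. Qed.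

Lemma Re_le_absc z : complex.Re z <= absc z.
Proof.
have := normc_ge_Re z; rewrite normr_absc lecR.
exact: le_trans (ler_norm _).
Qed.

Lemma ReD z w : complex.Re (z + w) = complex.Re z + complex.Re w.
Proof. by case: z; case: w. Qed.

Lemma Re_realM x z : complex.Re (x%:C * z) = x * complex.Re z.
Proof. by case: z => c d /=; ring. Qed.

Lemma Re_sqr z : complex.Re (z ^+ 2) = complex.Re z ^+ 2 - complex.Im z ^+ 2.
Proof. by case: z => a b; rewrite !expr2. Qed.

Lemma cexpD z w : cexp z * cexp w = cexp (z + w).
Proof.
case: z => a b; case: w => c d; rewrite /cexp /= expRD cosD sinD.
by apply/eqP; rewrite eq_complex /=; apply/andP; split; apply/eqP; ring.
Qed.

Lemma cexp0 : cexp (0 : R[i]) = 1.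
Proof. by rewrite /cexp /= expR0 cos0 sin0 mul1r. Qed.

Lemma cexp_sum m n (F : nat -> R[i]) :
  \prod_(m <= i < n) cexp (F i) = cexp (\sum_(m <= i < n) F i).
Proof. by rewrite (big_morph (@cexp R) (fun z w => esym (cexpD z w)) cexp0). Qed.

Lemma absc_cexp z : absc (cexp z) = expR (complex.Re z).
Proof.
rewrite /cexp abscM absc_real ger0_norm ?expR_ge0 //.
by rewrite /= cos2Dsin2 sqrtr1 mulr1.
Qed.

Lemma Re_sqrtc_ge0 z : 0 <= complex.Re (sqrtc z).
Proof. by case: z => a b /=; rewrite sqrtr_ge0. Qed.

Lemma Re_sqrtc_ge x z : 0 <= x -> x ^+ 2 <= complex.Re z -> x <= complex.Re (sqrtc z).
Proof.
move=> x_ge0; rewrite -{1}(sqr_sqrtc z) Re_sqr.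
have := Re_sqrtc_ge0 z; have := sqr_ge0 (complex.Im (sqrtc z)); nra.
Qed.

Lemma sqr_eq_Re_gt0 s t : s ^+ 2 = t ^+ 2 ->
  0 < complex.Re s -> 0 <= complex.Re t -> s = t.
Proof.
move=> st Rs Rt; have /eqP : (s - t) * (s + t) = 0 by rewrite -subr_sqr st subrr.
rewrite mulf_eq0 => /orP[|/eqP st0]; first by rewrite subr_eq0 => /eqP.
have := congr1 (@complex.Re R) st0; rewrite ReD /= => {st st0} ?; exfalso; lra.
Qed.

Lemma sqrtc_scale x a : 0 < x ->
  sqrtc (1 + 'i * (a / x ^+ 2)%:C) * x%:C = sqrtc ((x ^+ 2)%:C + 'i * a%:C).
Proof.
move=> x_gt0; apply: sqr_eq_Re_gt0; last exact: Re_sqrtc_ge0.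
  rewrite exprMn !sqr_sqrtc -rmorphXn /= mulrDl mul1r -mulrA -rmorphM /=.
  by rewrite divfK // expf_neq0 // gt_eqF.
have : 1 <= complex.Re (sqrtc (1 + 'i * (a / x ^+ 2)%:C)).
  by apply: Re_sqrtc_ge; rewrite ?expr1n //=; lra.
by rewrite [_ * x%:C]mulrC Re_realM; nra.
Qed.

End ComplexFacts.

Section Estimates.
Variable R : realType.
Implicit Types (r p e x y : R[i]) (c q s t : R).

Lemma absc_rp1_ge r p c q : absc r <= c -> absc p <= q ->
  1 - c * q <= absc (r * p + 1).
Proof.
move=> rc pq; have := abscD_ge 1 (r * p).
rewrite absc1 abscM [1 + r * p]addrC => y_ge.
have := ler_pM (absc_ge0 r) (absc_ge0 p) rc pq; lra.
Qed.

Lemma absc_inv_rp1_sub1 r p : absc r <= 1/2 -> absc p <= 1 ->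
  absc ((r * p + 1)^-1 - 1) <= absc p.
Proof.
move=> r_small p_le1.
have y_ge : 1/2 <= absc (r * p + 1).
  have := absc_rp1_ge (le_refl (absc r)) p_le1.
  have := absc_ge0 r; lra.
have rp1_neq0 : r * p + 1 != 0.
  by apply: contraTneq y_ge => ->; rewrite absc0; lra.
have : absc ((r * p + 1)^-1 - 1) * absc (r * p + 1) = absc r * absc p.
  rewrite -!abscM -abscN; congr absc.
  by rewrite mulrBl mulVf // mul1r; ring.
have := absc_ge0 ((r * p + 1)^-1 - 1); have := absc_ge0 p; nra.
Qed.

(* Along the recursion the bound grows linearly: [3 q] absorbs both [p] and
   the loss in the denominator. *)
Lemma absc_refl_step r p e c q : 0 <= q ->
  absc r <= c -> absc p <= q -> absc e <= 1 -> c + 3 * q <= 1/2 ->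
  absc ((r + p) / (r * p + 1) * e) <= c + 3 * q.
Proof.
move=> q_ge0 rc pq e_le1 cq_small.
have c_ge0 : 0 <= c := le_trans (absc_ge0 r) rc.
have y_ge := absc_rp1_ge rc pq.
have y_gt0 : 0 < absc (r * p + 1) by nra.
have num_le : absc (r + p) <= (c + 3 * q) * absc (r * p + 1).
  have := abscD_le r p.
  have : (c + 3 * q) * (c * q) <= 1/2 * (1/2 * q) by apply: ler_pM; nra.
  nra.
rewrite !abscM abscV -(mulr1 (c + 3 * q)).
apply: ler_pM; rewrite ?absc_ge0 ?mulr_ge0 ?invr_ge0 ?absc_ge0 //.
by rewrite ler_pdivrMr.
Qed.

Lemma absc_mul_sub1 x y s t : absc (x - 1) <= s -> absc (y - 1) <= t ->
  absc (x * y - 1) <= (1 + s) * (1 + t) - 1.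
Proof.
move=> xs yt.
have y_le : absc y <= 1 + t.
  by have := abscD_le (y - 1) 1; rewrite subrK absc1; lra.
have := abscD_le ((x - 1) * y) (y - 1); rewrite abscM.
have -> : (x - 1) * y + (y - 1) = x * y - 1 by ring.
have := ler_pM (absc_ge0 (x - 1)) (absc_ge0 y) xs y_le; lra.
Qed.

Lemma absc_prod_sub1 t (F : nat -> R[i]) m n :
  (forall i, (m <= i < n)%N -> absc (F i - 1) <= t) ->
  absc (\prod_(m <= i < n) F i - 1) <= (1 + t) ^+ (n - m) - 1.
Proof.
elim: n => [|n IH] Ft.
  by rewrite big_geq // subrr absc0 sub0n expr0 subrr.
have [mn|nm] := leqP m n; last first.
  rewrite big_geq // (_ : n.+1 - m = 0)%N; last by apply/eqP; rewrite subn_eq0.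
  by rewrite subrr absc0 expr0 subrr.
rewrite big_nat_recr //= subSn // exprSr.
have -> : (1 + t) ^+ (n - m) * (1 + t) - 1 = (1 + ((1 + t) ^+ (n - m) - 1)) * (1 + t) - 1.
  by ring.
apply: absc_mul_sub1; last by apply: Ft; rewrite mn ltnSn.
by apply: IH => i /andP[mi ni]; apply: Ft; rewrite mi ltnS ltnW.
Qed.

Lemma expr1D_sub1_le t m : 0 <= t -> t <= 1 -> (1 + t) ^+ m - 1 <= t * (m%:R * 2 ^+ m).
Proof.
move=> t_ge0 t_le1; elim: m => [|m IH]; first by rewrite expr0 subrr mul0r mulr0.
rewrite exprS -natr1 exprS.
have two_m_ge1 : 1 <= (2 : R) ^+ m by rewrite exprn_ege1 //; lra.
have tmq_ge0 : 0 <= t * (m%:R * 2 ^+ m) by rewrite !mulr_ge0 ?ler0n //; lra.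
have : (1 + t) * ((1 + t) ^+ m - 1) <= (1 + t) * (t * (m%:R * 2 ^+ m)).
  by apply: ler_wpM2l => //; lra.
nra.
Qed.

End Estimates.

Section Reflection.
Variables (R : realType) (omega mu : R) (N : nat) (sigma h : nat -> R) (lam : R).

Local Notation a j := (omega * mu * sigma j).
Local Notation u j := (u omega mu sigma j lam).
Local Notation Psi j := (Psi omega mu sigma j lam).
Local Notation Rup n j := (Rup omega mu sigma h n j lam).
Local Notation Rrefl j := (Rrefl omega mu N sigma h j lam).

Definition asum : R := \sum_(1 <= j < N.+1) a j.

Definition atten j : R[i] := cexp (- (2%:R * u j * (h j)%:C)).

Definition inv_denom j : R[i] := (Rrefl j.+1 * Psi j.+1 + 1)^-1.

(* [1 + rel_err k] is the factor [1 + epsilon_k] of the expansion. *)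
Definition rel_err k : R[i] :=
  4%:R * (lam ^+ 2)%:C / (u k + u k.+1) ^+ 2 * \prod_(1 <= i < k.+1) inv_denom i - 1.

Lemma Rup_expansion n j : (n + j = N)%N ->
  Rup n j = \sum_(j <= k < N) Psi k.+1 * \prod_(j <= i < k.+1) (atten i * inv_denom i).
Proof.
elim: n j => [|n IH] j nj; first by rewrite big_geq //= -nj.
have nj1 : (n + j.+1 = N)%N by rewrite addnS.
have jN : (j < N)%N by rewrite -nj1 addnS ltnS leq_addl.
have denomE : inv_denom j = (Rup n j.+1 * Psi j.+1 + 1)^-1.
  by rewrite /inv_denom /Defs.Rrefl -nj1 addnK.
rewrite /= big_ltn // big_nat1 (@eq_big_nat _ _ _ _ _ _
   (fun k => atten j * inv_denom j * (Psi k.+1 * \prod_(j.+1 <= i < k.+1) (atten i * inv_denom i)))).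
  by rewrite -mulr_sumr -(IH _ nj1) denomE /atten; ring.
by move=> k /andP[jk _]; rewrite big_ltn 1?mulrCA // ltnS ltnW.
Qed.

Section PositiveLambda.
Hypothesis lam_gt0 : 0 < lam.

Lemma uE j : (0 < j)%N -> u j = sqrtc ((lam ^+ 2)%:C + 'i * (a j)%:C).
Proof. by case: j. Qed.

Lemma u_sqr j : (0 < j)%N -> u j ^+ 2 = (lam ^+ 2)%:C + 'i * (a j)%:C.
Proof. by move=> /uE ->; rewrite sqr_sqrtc. Qed.

Lemma Re_u_ge j : (0 < j)%N -> lam <= complex.Re (u j).
Proof.
move=> /uE ->; apply: Re_sqrtc_ge; first exact: ltW.
by rewrite ReD [_ * (a j)%:C]mulrC Re_realM /= mulr0 addr0.
Qed.

Lemma absc_u_add_ge j : (0 < j)%N -> 2 * lam <= absc (u j + u j.+1).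
Proof.
move=> j_gt0; have := Re_le_absc (u j + u j.+1); rewrite ReD.
have := Re_u_ge j_gt0; have := @Re_u_ge j.+1 isT; lra.
Qed.

Lemma u_add_neq0 j : (0 < j)%N -> u j + u j.+1 != 0.
Proof.
by move=> /absc_u_add_ge; apply: contraTneq => ->; rewrite absc0 -ltNge mulr_gt0.
Qed.

(* [u_j - lam = i a_j / (u_j + lam)] and [|u_j + lam| >= 2 lam]. *)
Lemma absc_u_sub j : (0 < j)%N -> 0 <= a j -> absc (u j - lam%:C) * (2 * lam) <= a j.
Proof.
move=> j_gt0 a_ge0.
have : absc (u j - lam%:C) * absc (u j + lam%:C) = a j.
  rewrite -abscM -subr_sqr u_sqr // -rmorphXn addrAC subrr add0r.
  by rewrite abscM absc_i absc_real mul1r ger0_norm.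
have : 2 * lam <= absc (u j + lam%:C).
  by have := Re_le_absc (u j + lam%:C); rewrite ReD /=; have := Re_u_ge j_gt0; lra.
have := absc_ge0 (u j - lam%:C); nra.
Qed.

Lemma absc_Psi j : (0 < j)%N -> 0 <= a j -> 0 <= a j.+1 ->
  absc (Psi j.+1) * (4 * lam ^+ 2) <= a j + a j.+1.
Proof.
move=> j_gt0 aj_ge0 aj1_ge0.
have PsiE : absc (Psi j.+1) * absc (u j + u j.+1) = absc (u j - u j.+1).
  by rewrite -abscM /Defs.Psi /= divfK ?u_add_neq0.
have num_le : absc (u j - u j.+1) * (2 * lam) <= a j + a j.+1.
  have -> : u j - u j.+1 = (u j - lam%:C) - (u j.+1 - lam%:C) by ring.
  apply: le_trans (ler_wpM2r _ (abscB_le _ _)) _; first by rewrite mulr_ge0 ?ler0n ?ltW.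
  by rewrite mulrDl lerD // absc_u_sub.
have : absc (Psi j.+1) * (2 * lam) <= absc (Psi j.+1) * absc (u j + u j.+1).
  exact/ler_wpM2l/absc_u_add_ge/j_gt0/absc_ge0.
rewrite PsiE => Psi_le; apply: le_trans num_le.
rewrite (_ : 4 * lam ^+ 2 = (2 * lam) * (2 * lam)); last by ring.
by rewrite [absc _ * _]mulrA; apply: ler_wpM2r => //; rewrite mulr_ge0 ?ler0n ?ltW.
Qed.

Lemma absc_u_add_sub j : (0 < j)%N -> 0 <= a j -> 0 <= a j.+1 ->
  absc (u j + u j.+1 - (2 * lam)%:C) * (2 * lam) <= a j + a j.+1.
Proof.
move=> j_gt0 aj_ge0 aj1_ge0.
have -> : u j + u j.+1 - (2 * lam)%:C = (u j - lam%:C) + (u j.+1 - lam%:C).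
  by rewrite rmorphM /=; ring.
apply: le_trans (ler_wpM2r _ (abscD_le _ _)) _; first by rewrite mulr_ge0 ?ler0n ?ltW.
by rewrite mulrDl lerD // absc_u_sub.
Qed.

(* [4 lam^2 - s^2 = - (s - 2 lam) (s + 2 lam)] with [s = u_j + u_(j+1)]. *)
Lemma absc_lead_sub1 j : (0 < j)%N -> 0 <= a j -> 0 <= a j.+1 ->
  a j + a j.+1 <= 2 * lam ^+ 2 ->
  absc (4%:R * (lam ^+ 2)%:C / (u j + u j.+1) ^+ 2 - 1) * lam ^+ 2 <= a j + a j.+1.
Proof.
move=> j_gt0 aj_ge0 aj1_ge0 a_small.
have s_ge := absc_u_add_ge j_gt0.
have d_le := absc_u_add_sub j_gt0 aj_ge0 aj1_ge0.
set s := u j + u j.+1 in s_ge d_le *.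
have s_neq0 : s != 0 by apply: u_add_neq0.
have lead_eq : (4%:R * (lam ^+ 2)%:C / s ^+ 2 - 1) * s ^+ 2 =
               - ((s - (2 * lam)%:C) * ((s - (2 * lam)%:C) + (4 * lam)%:C)).
  rewrite mulrBl divfK ?expf_neq0 // !expr2 !rmorphM /= !rmorph_nat; ring.
have : absc (4%:R * (lam ^+ 2)%:C / s ^+ 2 - 1) * absc s ^+ 2 =
       absc (s - (2 * lam)%:C) * absc ((s - (2 * lam)%:C) + (4 * lam)%:C).
  rewrite -abscM -[in RHS]abscN -lead_eq abscM.
  by rewrite [in RHS]expr2 [absc (s * s)]abscM -expr2.
have := abscD_le (s - (2 * lam)%:C) (4 * lam)%:C.
rewrite absc_real ger0_norm; last by rewrite mulr_ge0 ?ler0n ?ltW.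
move=> w_le xE; clear lead_eq.
set x := absc (_ - 1) in xE *; set d := absc (s - _) in w_le xE d_le.
set w := absc (_ + _) in w_le xE.
have x_ge0 : 0 <= x := absc_ge0 _.
have d_ge0 : 0 <= d := absc_ge0 _.
have w_ge0 : 0 <= w := absc_ge0 _.
have d_le_lam : d <= lam by have := lam_gt0; nra.
have s2_ge : 4 * lam ^+ 2 <= absc s ^+ 2 by nra.
have : x * (4 * lam ^+ 2) <= x * absc s ^+ 2 by apply: ler_wpM2l.
have : d * w <= d * (5 * lam) by apply: ler_wpM2l => //; lra.
nra.
Qed.

Lemma absc_atten j : (0 < j)%N -> 0 <= h j -> absc (atten j) <= 1.
Proof.
move=> j_gt0 hj_ge0; rewrite /atten absc_cexp expR_le1.
have -> : - (2%:R * u j * (h j)%:C) = (- (2 * h j))%:C * u j.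
  by rewrite rmorphN rmorphM /= rmorph_nat; ring.
by rewrite Re_realM; have := Re_u_ge j_gt0; have := lam_gt0; nra.
Qed.

Lemma prod_atten k :
  \prod_(1 <= i < k.+1) atten i = cexp (- (gamma omega mu sigma h k lam * lam%:C)).
Proof.
rewrite cexp_sum /gamma mulr_suml -sumrN; congr cexp.
apply: eq_big_nat => i /andP[i_gt0 _].
by rewrite uE // -(sqrtc_scale _ lam_gt0) /cc; ring.
Qed.

Lemma Psi_succE j : (0 < j)%N -> Psi j.+1 = (u j ^+ 2 - u j.+1 ^+ 2) / (u j + u j.+1) ^+ 2.
Proof.
move=> j_gt0; have := u_add_neq0 j_gt0.
by rewrite /Defs.Psi /= => s_neq0; field.
Qed.

Lemma Rrefl1_expansion : (0 < N)%N ->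
  Rrefl 1 = \sum_(1 <= k < N) (u k ^+ 2 - u k.+1 ^+ 2) / (4%:R * (lam ^+ 2)%:C)
              * (1 + rel_err k) * cexp (- (gamma omega mu sigma h k lam * lam%:C)).
Proof.
move=> N_gt0; rewrite /Defs.Rrefl Rup_expansion ?subnK //.
apply: eq_big_nat => k /andP[k_gt0 _].
rewrite big_split /= prod_atten Psi_succE // /rel_err.
have lam_neq0 : lam%:C != 0 :> R[i] by rewrite fmorph_eq0 gt_eqF.
by field; rewrite lam_neq0 u_add_neq0.
Qed.

End PositiveLambda.

Section LargeLambda.
Hypotheses (N_gt0 : (0 < N)%N) (a_ge0 : forall j, (1 <= j <= N)%N -> 0 <= a j)
  (h_ge0 : forall j, (1 <= j < N)%N -> 0 <= h j) (lam_large : 1 + 4 * N%:R * asum <= lam).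

Lemma asum_ge0 : 0 <= asum.
Proof. by rewrite /asum big_nat_cond sumr_ge0 // => j /andP[/a_ge0]. Qed.

Lemma a_le_asum j : (1 <= j <= N)%N -> a j <= asum.
Proof.
move=> jN; rewrite /asum (bigD1_seq j) ?mem_index_iota ?ltnS ?iota_uniq //= lerDl.
rewrite big_seq_cond sumr_ge0 // => i /andP[+ _].
by rewrite mem_index_iota ltnS => /a_ge0.
Qed.

Lemma large_lam_gt0 : 0 < lam.
Proof.
have := asum_ge0; have := lam_large; have : 0 <= (N%:R : R) by rewrite ler0n.
nra.
Qed.

Lemma asum_le_sqr : 4 * N%:R * asum <= lam ^+ 2.
Proof.
have := asum_ge0; have := lam_large; have : 0 <= (N%:R : R) by rewrite ler0n.
nra.
Qed.

Let lam2_gt0 : 0 < lam ^+ 2.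
Proof. by rewrite exprn_gt0 ?large_lam_gt0. Qed.

Let delta := 2 * asum / lam ^+ 2.

Let delta_ge0 : 0 <= delta.
Proof. by rewrite divr_ge0 ?sqr_ge0 // mulr_ge0 ?asum_ge0. Qed.

Let delta_le1 : delta <= 1.
Proof.
rewrite /delta ler_pdivrMr // mul1r.
have := asum_le_sqr; have := asum_ge0; have : 1 <= (N%:R : R) by rewrite ler1n.
nra.
Qed.

Let le_delta x c : 0 < c -> x * (c * lam ^+ 2) <= 2 * asum -> x <= delta / c.
Proof. by move=> c_gt0; rewrite /delta !ler_pdivlMr // -mulrA. Qed.

Let three_N_delta : 3 * N%:R * (delta / 4) <= 1/2.
Proof.
rewrite -(ler_pM2r lam2_gt0).
have -> : 3 * N%:R * (delta / 4) * lam ^+ 2 = 3 * N%:R * asum / 2.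
  by rewrite /delta; field; rewrite gt_eqF ?large_lam_gt0.
have := asum_le_sqr; have := asum_ge0; have : 0 <= (N%:R : R) by rewrite ler0n.
nra.
Qed.

Lemma absc_Psi_small j : (1 <= j < N)%N -> absc (Psi j.+1) <= delta / 4.
Proof.
move=> /andP[j_gt0 jN]; apply: le_delta; first by [].
have aj_le := @a_le_asum j; have aj1_le := @a_le_asum j.+1.
have := absc_Psi large_lam_gt0 j_gt0 (@a_ge0 j _) (@a_ge0 j.+1 _).
rewrite j_gt0 jN ltnW //= in aj_le aj1_le * => /(_ isT isT) Psi_le.
have := aj_le isT; have := aj1_le isT; lra.
Qed.

Lemma absc_Rup_small n j : (0 < j)%N -> (n + j = N)%N ->
  absc (Rup n j) <= 3 * n%:R * (delta / 4).
Proof.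
elim: n j => [|n IH] j j_gt0 nj; first by rewrite absc0 mulr0 mul0r.
have nj1 : (n + j.+1 = N)%N by rewrite addnS.
have jN : (j < N)%N by rewrite -nj1 addnS ltnS leq_addl.
have -> : 3 * n.+1%:R * (delta / 4) = 3 * n%:R * (delta / 4) + 3 * (delta / 4).
  by rewrite -natr1; ring.
apply: absc_refl_step.
- by rewrite divr_ge0.
- exact: IH nj1.
- by apply: absc_Psi_small; rewrite j_gt0.
- by apply/absc_atten/h_ge0; rewrite ?large_lam_gt0 ?j_gt0.
- have : (n.+1%:R : R) <= N%:R by rewrite ler_nat -nj addSn ltnS leq_addr.
  by rewrite -natr1; have := three_N_delta; have := delta_ge0; nra.
Qed.

Lemma absc_inv_denom_sub1 i : (1 <= i < N)%N -> absc (inv_denom i - 1) <= delta.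
Proof.
move=> iN; have Psi_le := absc_Psi_small iN; case/andP: iN => i_gt0 iN.
apply: le_trans (absc_inv_rp1_sub1 _ _) _.
- have := absc_Rup_small (n := (N - i.+1)%N) (j := i.+1) isT (subnK iN).
  have : ((N - i.+1)%:R : R) <= N%:R by rewrite ler_nat leq_subr.
  have := three_N_delta; have := delta_ge0; rewrite /Defs.Rrefl; nra.
- by have := delta_le1; have := delta_ge0; lra.
- by have := delta_ge0; lra.
Qed.

Lemma absc_lead_small k : (1 <= k < N)%N ->
  absc (4%:R * (lam ^+ 2)%:C / (u k + u k.+1) ^+ 2 - 1) <= delta.
Proof.
move=> /andP[k_gt0 kN]; rewrite -[delta]divr1; apply: le_delta => //; rewrite mul1r.
have ak_le : a k <= asum by apply: a_le_asum; rewrite k_gt0 ltnW.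
have ak1_le : a k.+1 <= asum by apply: a_le_asum.
have a_small : a k + a k.+1 <= 2 * lam ^+ 2.
  have := asum_le_sqr; have := asum_ge0; have : 1 <= (N%:R : R) by rewrite ler1n.
  nra.
have := absc_lead_sub1 large_lam_gt0 k_gt0 (@a_ge0 k _) (@a_ge0 k.+1 _).
rewrite k_gt0 kN ltnW //= => /(_ isT isT a_small) lead_le.
by apply: le_trans lead_le _; lra.
Qed.

Lemma absc_rel_err k : (1 <= k < N)%N ->
  absc (rel_err k) <= 2 * asum * (N%:R * 2 ^+ N) / lam ^+ 2.
Proof.
move=> kN; have /andP[_ k_ltN] := kN.
have err_le : absc (rel_err k) <= (1 + delta) ^+ k.+1 - 1.
  apply: le_trans (absc_mul_sub1 (absc_lead_small kN) (absc_prod_sub1 _)) _.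
  - move=> i /andP[i_gt0 ik]; apply: absc_inv_denom_sub1.
    by rewrite i_gt0 (leq_trans ik).
  - by rewrite subn1 /= [1 + (_ - 1)]addrC subrK exprS.
apply: le_trans err_le _; apply: le_trans (expr1D_sub1_le _ delta_ge0 delta_le1) _.
rewrite /delta mulrAC ler_pM2r ?invr_gt0 //; apply: ler_wpM2l.
  by rewrite mulr_ge0 ?asum_ge0.
apply: ler_pM; rewrite ?ler0n ?exprn_ge0 ?ler_nat //.
by apply: ler_weXn2l; rewrite ?ler1n.
Qed.

End LargeLambda.

End Reflection.

Theorem lemma3 (R : realType) (omega mu : R) (N : nat)
  (sigma h : nat -> R) (k : nat -> R[i]) :
  0 < omega -> 0 < mu -> (2 <= N)%N ->
  (forall j, (1 <= j <= N)%N -> 0 < sigma j) ->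
  (forall j, (1 <= j <= N.-1)%N -> 0 < h j) ->
  k 0%N = 0 ->
  (forall j, (1 <= j <= N)%N -> k j ^+ 2 = - ('i%C * (omega * mu * sigma j)%:C)) ->
  exists eps : nat -> R -> R[i],
    (forall kk, (1 <= kk <= N.-1)%N ->
       exists (K M : R), forall lam, M <= lam -> `|eps kk lam| <= (K / lam ^+ 2)%:C)
    /\ exists M : R, forall lam, M <= lam ->
       Rrefl omega mu N sigma h 1 lam =
       \sum_(1 <= kk < N) (k kk.+1 ^+ 2 - k kk ^+ 2) / (4%:R * (lam ^+ 2)%:C)
          * (1 + eps kk lam) * cexp (- (gamma omega mu sigma h kk lam * lam%:C)).
Proof.
move=> omega_gt0 mu_gt0 N_ge2 sigma_gt0 h_gt0 _ k_sq.
have N_gt0 : (0 < N)%N by apply: leq_trans N_ge2.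
have a_ge0 j : (1 <= j <= N)%N -> 0 <= omega * mu * sigma j.
  by move/sigma_gt0 => sigma_gt0j; rewrite ltW // !mulr_gt0.
have h_ge0 j : (1 <= j < N)%N -> 0 <= h j.
  by move=> /andP[j_gt0 jN]; rewrite ltW // h_gt0 // j_gt0 -ltnS prednK.
set M := 1 + 4 * N%:R * asum omega mu N sigma.
exists (fun k lam => rel_err omega mu N sigma h lam k); split.
  move=> k' /andP[k_gt0 kN]; exists (2 * asum omega mu N sigma * (N%:R * 2 ^+ N)), M.
  move=> lam lam_large; rewrite normr_absc lecR.
  by apply: absc_rel_err; rewrite // k_gt0 (leq_ltn_trans kN) // ltn_predL.
exists M => lam lam_large; have lam_gt0 := large_lam_gt0 a_ge0 lam_large.
rewrite Rrefl1_expansion //; apply: eq_big_nat => k' /andP[k_gt0 kN].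
have k_range : (1 <= k' <= N)%N by rewrite k_gt0 ltnW.
rewrite !u_sqr // (k_sq _ k_range) (k_sq k'.+1 kN).
congr (_ / _ * _ * _).
by rewrite opprD addrACA subrr add0r opprK addrC.
Qed.
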